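(* Let $x_0\in\mathbb{R}$, $r>0$, and let $F:(x_0-r,x_0+r)\to\mathbb{R}$ be of class $C^3$ with $F(x_0)=x_0$, $F'(x_0)=1$, $F''(x_0)<0$. Then there exists $r_1>0$ such that for every $x_1\in(x_0,x_0+r_1)$ the sequence defined by $x_{n+1}=F(x_n)$ satisfies $|x_n-x_0|\simeq n^{-1}$ as $n\to\infty$, the set $S(x_1)=\{x_n:n\ge1\}$ satisfies $\dim_BS(x_1)=\frac12$, and $S(x_1)$ is Minkowski nondegenerate. Analogously, if instead $F''(x_0)>0$, the same conclusions hold for every $x_1\in(x_0-r_1,x_0)$.
   Context: For sequences of positive reals, $a_n\simeq b_n$ as $n\to\infty$ means there exist constants $0<A\le B$ with $A\le a_n/b_n\le B$ for all $n$. For a bounded set $S\subset\mathbb{R}$ and $\varepsilon>0$, $S_\varepsilon=\{y: \mathrm{dist}(y,S)<\varepsilon\}$ and $|S_\varepsilon|$ is its Lebesgue measure. $\mathcal M^{*s}(S)=\limsup_{\varepsilon\to0}|S_\varepsilon|/\varepsilon^{1-s}$, $\mathcal M_*^{s}(S)=\liminf_{\varepsilon\to0}|S_\varepsilon|/\varepsilon^{1-s}$; $\overline{\dim}_BS=\inf\{s\ge0:\mathcal M^{*s}(S)=0\}$, $\underline{\dim}_BS=\inf\{s\ge0:\mathcal M_*^{s}(S)=0\}$, and $\dim_BS$ is their common value when equal. $S$ is Minkowski nondegenerate if there is $d\ge0$ with $0<\mathcal M_*^d(S)\le\mathcal M^{*d}(S)<\infty$. *)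

From Stdlib Require Import Reals Lra.
Open Scope R_scope.

Definition asymp_equiv (a b : nat -> R) : Prop :=
  exists A B : R, 0 < A /\ A <= B /\
    forall n : nat, (1 <= n)%nat -> A <= a n / b n <= B.

Definition is_glb (E : R -> Prop) (m : R) : Prop :=
  (forall x, E x -> m <= x) /\ (forall b, (forall x, E x -> b <= x) -> b <= m).

(* Lebesgue (outer) measure: infimum of total lengths of countable covers
   by open intervals (a n, b n) with convergent length series. *)
Definition cover_length (A : R -> Prop) (l : R) : Prop :=
  exists a b : nat -> R,
    (forall n, a n <= b n) /\
    (forall x, A x -> exists n, a n < x < b n) /\
    infinite_sum (fun n => b n - a n) l.

Definition lebesgue_measure (A : R -> Prop) (m : R) : Prop :=
  is_glb (cover_length A) m.

Definition nbhd (S : R -> Prop) (eps : R) (y : R) : Prop :=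
  exists x, S x /\ Rabs (y - x) < eps.

Definition mink_ratio (S : R -> Prop) (s eps q : R) : Prop :=
  exists m, lebesgue_measure (nbhd S eps) m /\ q = m / Rpower eps (1 - s).

(* M^{*s}(S) = 0, i.e. limsup_{eps->0} ratio = 0 (ratio is nonnegative). *)
Definition upper_content_zero (S : R -> Prop) (s : R) : Prop :=
  forall delta, 0 < delta -> exists eta, 0 < eta /\
    forall eps q, 0 < eps < eta -> mink_ratio S s eps q -> q < delta.

(* M_*^s(S) = 0, i.e. liminf_{eps->0} ratio = 0 (ratio is nonnegative). *)
Definition lower_content_zero (S : R -> Prop) (s : R) : Prop :=
  forall delta eta, 0 < delta -> 0 < eta ->
    exists eps q, 0 < eps < eta /\ mink_ratio S s eps q /\ q < delta.

Definition lower_content_pos (S : R -> Prop) (s : R) : Prop :=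
  exists c eta, 0 < c /\ 0 < eta /\
    forall eps q, 0 < eps < eta -> mink_ratio S s eps q -> c <= q.

Definition upper_content_finite (S : R -> Prop) (s : R) : Prop :=
  exists C eta, 0 < eta /\
    forall eps q, 0 < eps < eta -> mink_ratio S s eps q -> q <= C.

Definition upper_box_dim (S : R -> Prop) (d : R) : Prop :=
  is_glb (fun s => 0 <= s /\ upper_content_zero S s) d.

Definition lower_box_dim (S : R -> Prop) (d : R) : Prop :=
  is_glb (fun s => 0 <= s /\ lower_content_zero S s) d.

Definition box_dim (S : R -> Prop) (d : R) : Prop :=
  upper_box_dim S d /\ lower_box_dim S d.

(* 0 < M_*^d(S) <= M^{*d}(S) < infinity for some d >= 0
   (the middle inequality liminf <= limsup always holds). *)
Definition minkowski_nondegenerate (S : R -> Prop) : Prop :=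
  exists d, 0 <= d /\ lower_content_pos S d /\ upper_content_finite S d.

Definition orbit_set (x : nat -> R) : R -> Prop :=
  fun y => exists n, (1 <= n)%nat /\ y = x n.

Definition orbit_conclusions (x0 : R) (x : nat -> R) : Prop :=
  asymp_equiv (fun n => Rabs (x n - x0)) (fun n => / INR n) /\
  box_dim (orbit_set x) (1/2) /\
  minkowski_nondegenerate (orbit_set x).

(* Near a fixed point x0 with F'(x0) = 1 and F''(x0) <> 0, Taylor's formula
   gives, on the attracting side (sign sg = -sign F''(x0)), a two-sided bound
   be*(z-x0)^2 <= sg*(z - F z) <= al*(z-x0)^2.  For y_n = sg*(x_n - x0) this is
   the quadratic recurrence be*y_n^2 <= y_n - y_(n+1) <= al*y_n^2, whose
   reciprocals grow linearly: y_n ~ 1/n and the gaps satisfy y_n - y_(n+1) <= G/n^2. *)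

From Stdlib Require Import Reals Lra Lia List ZArith Classical.
Open Scope R_scope.

(** * 1. Lebesgue measure of intervals and of explicit covers *)

Lemma partial_sum_le_sum (f : nat -> R) (l : R) :
  (forall n, 0 <= f n) -> infinite_sum f l -> forall n, sum_f_R0 f n <= l.
Proof.
  intros Hf Hs n. apply growing_ineq.
  - intro k. simpl. specialize (Hf (S k)). lra.
  - intros e He. destruct (Hs e He) as [N HN]. exists N. exact HN.
Qed.

Fixpoint list_length (a b : nat -> R) (L : list nat) : R :=
  match L with nil => 0 | n :: L' => (b n - a n) + list_length a b L' end.

Lemma list_length_app a b l1 l2 :
  list_length a b (l1 ++ l2) = list_length a b l1 + list_length a b l2.
Proof. induction l1; simpl; lra. Qed.

Lemma list_length_nonneg a b L : (forall n, a n <= b n) -> 0 <= list_length a b L.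
Proof. intros H; induction L; simpl; [lra|]. specialize (H a0). lra. Qed.

Lemma list_length_seq a b K :
  list_length a b (seq 0 (S K)) = sum_f_R0 (fun n => b n - a n) K.
Proof.
  induction K; [simpl; lra|].
  rewrite seq_S, list_length_app, IHK. simpl. lra.
Qed.

(* Finitely many open intervals covering [u,v] have total length >= v - u.
   Induction on the number of intervals: remove the one containing v. *)
Lemma finite_cover_length (a b : nat -> R) : (forall n, a n <= b n) ->
  forall k (L : list nat), (length L <= k)%nat -> forall u v,
  (forall x, u <= x <= v -> exists n, In n L /\ a n < x < b n) ->
  v - u <= list_length a b L.
Proof.
  intros Hab k. induction k as [|k IH]; intros L HL u v Hc.
  - destruct L; [|simpl in HL; lia].
    destruct (Rle_dec u v) as [Huv|Huv]; [|simpl; lra].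
    destruct (Hc u) as [n [[] _]]; lra.
  - destruct (Rle_dec u v) as [Huv|Huv].
    2:{ pose proof (list_length_nonneg a b L Hab). lra. }
    destruct (Hc v) as [j [Hj Hjv]]; [lra|].
    destruct (in_split j L Hj) as [l1 [l2 ->]].
    rewrite list_length_app. simpl.
    pose proof (list_length_nonneg a b l1 Hab).
    pose proof (list_length_nonneg a b l2 Hab).
    destruct (Rlt_le_dec (a j) u) as [Hau|Hau]; [lra|].
    assert (Hrest : a j - u <= list_length a b (l1 ++ l2)).
    { apply IH.
      - rewrite length_app in *. simpl in HL. lia.
      - intros x Hx. destruct (Hc x) as [n [Hn Hnx]]; [lra|].
        exists n. split; [|exact Hnx].
        apply in_app_or in Hn. apply in_or_app.
        destruct Hn as [Hn|[Hn|Hn]]; [now left|subst n; lra|now right]. }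
    rewrite list_length_app in Hrest. lra.
Qed.

(* Heine-Borel: a countable open cover of [u,v] has a finite subcover,
   found by taking the supremum of the points up to which one exists. *)
Lemma finite_subcover (a b : nat -> R) (u v : R) : u <= v ->
  (forall x, u <= x <= v -> exists n, a n < x < b n) ->
  exists K, forall x, u <= x <= v -> exists n, (n < K)%nat /\ a n < x < b n.
Proof.
  intros Huv Hc.
  set (E := fun t => u <= t <= v /\ exists K, forall x, u <= x <= t ->
            exists n, (n < K)%nat /\ a n < x < b n).
  assert (Eu : E u).
  { split; [lra|]. destruct (Hc u) as [n0 Hn0]; [lra|]. exists (S n0).
    intros x Hx. exists n0. split; [lia|]. replace x with u by lra. exact Hn0. }
  assert (Hb : bound E) by (exists v; intros t [Ht _]; lra).
  destruct (completeness E Hb (ex_intro _ u Eu)) as [s [Hs1 Hs2]].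
  assert (Hus : u <= s) by (apply Hs1; exact Eu).
  assert (Hsv : s <= v) by (apply Hs2; intros t [Ht _]; lra).
  destruct (Hc s) as [j Hj]; [lra|].
  assert (Ht : exists t, E t /\ a j < t).
  { apply NNPP. intro Hn.
    assert (s <= a j); [|lra].
    apply Hs2. intros t Et. destruct (Rle_dec t (a j)); [auto|].
    exfalso. apply Hn. exists t. split; [auto|lra]. }
  destruct Ht as [t [[Ht1 [K HK]] Hat]].
  (* the interval (a j, b j) extends the finite cover beyond s *)
  set (w := Rmin v ((s + b j)/2)).
  assert (Ew : E w).
  { split. { unfold w. split; [apply Rmin_case; lra|apply Rmin_l]. }
    exists (Nat.max K (S j)). intros x Hx.
    destruct (Rle_dec x t) as [Hxt|Hxt].
    - destruct (HK x) as [n [Hn1 Hn2]]; [lra|]. exists n. split; [lia|auto].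
    - exists j. split; [lia|]. split; [lra|].
      assert (w <= (s + b j)/2) by apply Rmin_r. lra. }
  assert (Hws : w <= s) by (apply Hs1; exact Ew).
  unfold w in *. destruct (Rle_dec v ((s + b j)/2)) as [Hv|Hv].
  - rewrite Rmin_left in Ew by lra. destruct Ew as [_ [K' HK']]. exists K'. exact HK'.
  - rewrite Rmin_right in Hws by lra. lra.
Qed.

(* Any countable cover of a set containing (p,q) has length >= q - p:
   apply the finite bound to the compact subintervals [p+d, q-d]. *)
Lemma cover_length_interval (A : R -> Prop) (p q l : R) : p < q ->
  (forall y, p < y < q -> A y) -> cover_length A l -> q - p <= l.
Proof.
  intros Hpq HA [a [b [Hab [Hcov Hsum]]]].
  assert (Hf : forall n, 0 <= b n - a n) by (intro n; specialize (Hab n); lra).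
  assert (Hd : forall d, 0 < d -> 2 * d < q - p -> q - p - 2 * d <= l).
  { intros d Hd1 Hd2.
    destruct (finite_subcover a b (p + d) (q - d)) as [K HK]; [lra| |].
    { intros x Hx. apply Hcov, HA. lra. }
    assert (H1 : (q - d) - (p + d) <= list_length a b (seq 0 (S K))).
    { apply (finite_cover_length a b Hab (length (seq 0 (S K)))); [lia|].
      intros x Hx. destruct (HK x Hx) as [n [Hn1 Hn2]]. exists n. split; [|auto].
      apply in_seq. lia. }
    rewrite list_length_seq in H1. pose proof (partial_sum_le_sum _ _ Hf Hsum K). lra. }
  destruct (Rle_dec (q - p) l) as [H|H]; [auto|]. exfalso.
  set (d := Rmin ((q - p - l)/4) ((q-p)/4)).
  assert (d <= (q-p-l)/4) by apply Rmin_l. assert (d <= (q-p)/4) by apply Rmin_r.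
  assert (0 < d) by (unfold d; apply Rmin_case; lra).
  specialize (Hd d). lra.
Qed.

Lemma measure_ge_interval (A : R -> Prop) (p q m : R) : p < q ->
  (forall y, p < y < q -> A y) -> lebesgue_measure A m -> q - p <= m.
Proof.
  intros Hpq HA [_ Hglb]. apply Hglb. intros l Hl. eapply cover_length_interval; eauto.
Qed.

Lemma measure_le_cover (A : R -> Prop) (l m : R) :
  cover_length A l -> lebesgue_measure A m -> m <= l.
Proof. intros Hl [Hlb _]. apply Hlb, Hl. Qed.

Lemma measure_exists (A : R -> Prop) :
  (exists l, cover_length A l) -> exists m, lebesgue_measure A m.
Proof.
  intros [l0 Hl0].
  set (E := fun z => exists l, cover_length A l /\ z = - l).
  assert (Hb : bound E).
  { exists 0. intros z [l [[a [b [Hab [_ Hs]]]] ->]].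
    assert (Hf : forall n, 0 <= b n - a n) by (intro n; specialize (Hab n); lra).
    pose proof (partial_sum_le_sum _ _ Hf Hs 0). simpl in H. specialize (Hf 0%nat). lra. }
  destruct (completeness E Hb (ex_intro _ (-l0) (ex_intro _ l0 (conj Hl0 eq_refl))))
    as [s [Hs1 Hs2]].
  exists (-s). split.
  - intros x Hx. assert (-x <= s); [apply Hs1; exists x; split; auto|lra].
  - intros c Hc. assert (s <= -c); [|lra]. apply Hs2. intros z [l [Hl ->]].
    specialize (Hc l Hl). lra.
Qed.

(** * 2. Box dimension from two-sided square-root bounds on |S_eps| *)

Lemma Rpower_pos (x y : R) : 0 < Rpower x y.
Proof. unfold Rpower. apply exp_pos. Qed.

Lemma Rpower_small (a d : R) : 0 < a -> 0 < d ->
  exists eta, 0 < eta /\ forall e, 0 < e < eta -> Rpower e a < d.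
Proof.
  intros Ha Hd. exists (Rpower d (/ a)). split; [apply Rpower_pos|].
  intros e He. apply Rlt_le_trans with (Rpower (Rpower d (/a)) a).
  - apply Rlt_Rpower_l; lra.
  - rewrite Rpower_mult. replace (/ a * a) with 1 by (field; lra).
    rewrite Rpower_1 by lra. lra.
Qed.

Lemma Rpower_ge1 (e a : R) : 0 < e <= 1 -> a <= 0 -> 1 <= Rpower e a.
Proof.
  intros He Ha. replace a with (- (- a)) by ring. rewrite Rpower_Ropp.
  assert (H : Rpower e (- a) <= Rpower 1 (- a)) by (apply Rle_Rpower_l; lra).
  unfold Rpower at 2 in H. rewrite ln_1, Rmult_0_r, exp_0 in H.
  pose proof (Rpower_pos e (-a)).
  rewrite <- Rinv_1. apply Rinv_le_contravar; lra.
Qed.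

Lemma glb_threshold (P : R -> Prop) (d : R) : 0 <= d ->
  (forall s, d < s -> P s) -> (forall s, s < d -> ~ P s) ->
  is_glb (fun s => 0 <= s /\ P s) d.
Proof.
  intros Hd Habove Hbelow. split.
  - intros s [_ Hs]. destruct (Rle_dec d s) as [H|H]; [auto|].
    exfalso. apply (Hbelow s); [lra|auto].
  - intros b Hb. destruct (Rle_dec b d) as [H|H]; [auto|]. exfalso.
    assert (b <= (b + d)/2); [|lra]. apply Hb. split; [lra|]. apply Habove. lra.
Qed.

Section SqrtContent.
Variable S : R -> Prop.
Variables c1 C1 eta0 : R.
Hypothesis Hc1 : 0 < c1.
Hypothesis HC1 : 0 < C1.
Hypothesis Heta0 : 0 < eta0.
Hypothesis Hex : forall eps, 0 < eps < eta0 -> exists m, lebesgue_measure (nbhd S eps) m.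
Hypothesis Hbd : forall eps m, 0 < eps < eta0 -> lebesgue_measure (nbhd S eps) m ->
  c1 * sqrt eps <= m <= C1 * sqrt eps.

Lemma ratio_bounds s eps q : 0 < eps < eta0 -> mink_ratio S s eps q ->
  c1 * Rpower eps (s - 1/2) <= q <= C1 * Rpower eps (s - 1/2).
Proof.
  intros He [m [Hm ->]]. specialize (Hbd eps m He Hm).
  assert (HP : 0 < Rpower eps (1 - s)) by apply Rpower_pos.
  assert (Hsq : sqrt eps = Rpower eps (s - 1/2) * Rpower eps (1 - s)).
  { rewrite <- Rpower_plus, <- Rpower_sqrt by lra. f_equal. field. }
  rewrite Hsq in Hbd.
  assert (Hm' : m / Rpower eps (1 - s) * Rpower eps (1 - s) = m) by (field; lra).
  split; apply Rmult_le_reg_r with (Rpower eps (1 - s)); lra.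
Qed.

Lemma ratio_exists s eps : 0 < eps < eta0 -> exists q, mink_ratio S s eps q.
Proof.
  intros He. destruct (Hex eps He) as [m Hm]. exists (m / Rpower eps (1 - s)), m. auto.
Qed.

Lemma upper_zero_above s : 1/2 < s -> upper_content_zero S s.
Proof.
  intros Hs d Hd. destruct (Rpower_small (s - 1/2) (d / C1)) as [eta [Heta H]];
    [lra| apply Rdiv_lt_0_compat; lra|].
  exists (Rmin eta eta0). split; [apply Rmin_case; lra|].
  intros eps q He Hq.
  pose proof (Rmin_l eta eta0). pose proof (Rmin_r eta eta0).
  destruct (ratio_bounds s eps q ltac:(lra) Hq) as [_ H2].
  specialize (H eps ltac:(lra)).
  apply Rle_lt_trans with (C1 * Rpower eps (s - 1/2)); [lra|].
  apply Rmult_lt_reg_l with (/ C1); [apply Rinv_0_lt_compat; lra|].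
  rewrite <- Rmult_assoc, Rinv_l by lra. unfold Rdiv in H. lra.
Qed.

Lemma ratio_ge_below s eps q : s < 1/2 -> 0 < eps <= 1 -> eps < eta0 ->
  mink_ratio S s eps q -> c1 <= q.
Proof.
  intros Hs He He0 Hq.
  destruct (ratio_bounds s eps q ltac:(lra) Hq) as [H1 _].
  pose proof (Rpower_ge1 eps (s - 1/2) He ltac:(lra)).
  assert (c1 * 1 <= c1 * Rpower eps (s - 1/2)) by (apply Rmult_le_compat_l; lra).
  lra.
Qed.

Lemma lower_zero_not_below s : s < 1/2 -> ~ lower_content_zero S s.
Proof.
  intros Hs Hl. destruct (Hl c1 (Rmin 1 eta0) Hc1 ltac:(apply Rmin_case; lra))
    as [e [q [He [Hq Hlt]]]].
  pose proof (Rmin_l 1 eta0). pose proof (Rmin_r 1 eta0).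
  pose proof (ratio_ge_below s e q Hs ltac:(lra) ltac:(lra) Hq). lra.
Qed.

Lemma upper_zero_lower_zero s : upper_content_zero S s -> lower_content_zero S s.
Proof.
  intros Hu d eta Hd Heta. destruct (Hu d Hd) as [eta1 [Heta1 H]].
  set (e := Rmin eta (Rmin eta1 eta0) / 2).
  pose proof (Rmin_l eta (Rmin eta1 eta0)). pose proof (Rmin_r eta (Rmin eta1 eta0)).
  pose proof (Rmin_l eta1 eta0). pose proof (Rmin_r eta1 eta0).
  assert (0 < Rmin eta (Rmin eta1 eta0)) by (repeat apply Rmin_glb_lt; lra).
  destruct (ratio_exists s e ltac:(unfold e; lra)) as [q Hq].
  exists e, q. split; [unfold e; lra|]. split; [auto|]. apply (H e q); [unfold e; lra|auto].
Qed.

Lemma sqrt_content_box_dim : box_dim S (1/2).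
Proof.
  split; apply glb_threshold; try lra; intros s Hs.
  - now apply upper_zero_above.
  - intro Hu. apply (lower_zero_not_below s Hs), upper_zero_lower_zero, Hu.
  - now apply upper_zero_lower_zero, upper_zero_above.
  - now apply lower_zero_not_below.
Qed.

(* At the critical exponent 1/2 the ratio lies between c1 and C1. *)
Lemma sqrt_content_nondegenerate : minkowski_nondegenerate S.
Proof.
  exists (1/2). split; [lra|].
  assert (Hcrit : forall eps q, 0 < eps < eta0 -> mink_ratio S (1/2) eps q -> c1 <= q <= C1).
  { intros eps q He Hq. pose proof (ratio_bounds _ _ _ He Hq) as Hb.
    replace (1/2 - 1/2) with 0 in Hb by ring. rewrite Rpower_O in Hb by lra. lra. }
  split.
  - exists c1, eta0. split; [lra|]. split; [lra|]. intros eps q He Hq. apply (Hcrit eps q He Hq).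
  - exists C1, eta0. split; [lra|]. intros eps q He Hq. apply (Hcrit eps q He Hq).
Qed.
End SqrtContent.

(** * 3. Neighbourhoods of an orbit approaching x0 at rate 1/n *)

Lemma nat_above (z : R) : 0 < z -> exists N : nat, z < INR N <= z + 1.
Proof.
  intros Hz. destruct (archimed z) as [H1 H2].
  assert (H0 : (0 <= up z)%Z) by (apply le_IZR; simpl; lra).
  exists (Z.to_nat (up z)). rewrite INR_IZR_INZ, Z2Nat.id by exact H0. lra.
Qed.

(* The cut-off index N ~ K / sqrt eps separating "isolated" orbit points
   from the tail whose eps-neighbourhoods overlap. *)
Lemma scale_index (K eps : R) : 1 <= K -> 0 < eps < 1 ->
  exists N : nat, (1 <= N)%nat /\ K < INR N * sqrt eps <= 2 * K.
Proof.
  intros HK He. set (se := sqrt eps).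
  assert (Hse : 0 < se < 1).
  { unfold se. split; [apply sqrt_lt_R0; lra|]. rewrite <- sqrt_1. apply sqrt_lt_1; lra. }
  assert (Hz : K / se * se = K) by (field; lra).
  assert (HKse : K <= K / se).
  { apply Rmult_le_reg_r with se; [lra|]. rewrite Hz. nra. }
  destruct (nat_above (K / se)) as [N HN]; [lra|].
  exists N. split; [|split; nra].
  destruct N; [simpl in HN; lra|lia].
Qed.

Section OrbitGeometry.
Variables (x y : nat -> R) (x0 sg A B G : R).
Hypothesis Hsg : sg = 1 \/ sg = -1.
Hypothesis Hx : forall n, x n = x0 + sg * y n.
Hypothesis HA : 0 < A.
Hypothesis HB : 0 < B.
Hypothesis HG : 0 < G.
Hypothesis Hpos : forall n, (1 <= n)%nat -> 0 < y n.
Hypothesis Hdec : forall n, (1 <= n)%nat -> y (S n) < y n.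
Hypothesis Hup : forall n, (1 <= n)%nat -> y n <= B / INR n.
Hypothesis Hlow : forall n, (1 <= n)%nat -> A / INR n <= y n.
Hypothesis Hgap : forall n, (1 <= n)%nat -> y n - y (S n) <= G / (INR n * INR n).

Let Orb := orbit_set x.

Lemma y_le_from N j : (1 <= N)%nat -> y (N + j) <= y N.
Proof.
  intros HN. induction j; [rewrite Nat.add_0_r; lra|].
  rewrite Nat.add_succ_r. pose proof (Hdec (N + j) ltac:(lia)). lra.
Qed.

Lemma crossing_index N t : (1 <= N)%nat -> forall k, y (N + k) < t -> t <= y N ->
  exists n, (N <= n)%nat /\ y (S n) < t <= y n.
Proof.
  intros HN k. induction k as [|k IH]; intros H1 H2.
  - rewrite Nat.add_0_r in H1. lra.
  - destruct (Rlt_le_dec (y (N + k)) t) as [H|H]; [apply IH; auto|].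
    exists (N + k)%nat. split; [lia|]. rewrite <- Nat.add_succ_r. lra.
Qed.

Lemma Rabs_sg r : Rabs (sg * r) = Rabs r.
Proof.
  rewrite Rabs_mult. destruct Hsg as [->| ->];
    [rewrite Rabs_R1|rewrite Rabs_left by lra]; ring.
Qed.

Lemma tail_in_nbhd (eps : R) (N : nat) : (1 <= N)%nat -> 0 < eps ->
  G < eps * (INR N * INR N) ->
  forall t, 0 < t < y N -> nbhd Orb eps (x0 + sg * t).
Proof.
  intros HN He HGN t Ht.
  assert (HN1 : 1 <= INR N) by (apply (le_INR 1); lia).
  destruct (nat_above (B / t)) as [M HM]; [apply Rdiv_lt_0_compat; lra|].
  assert (HyM : y (N + M) < t).
  { pose proof (Hup (N + M) ltac:(lia)) as Hy.
    rewrite plus_INR in Hy.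
    assert (Hbt : B / t * t = B) by (field; lra).
    assert (HNM : 0 < INR N + INR M) by (pose proof (pos_INR M); lra).
    assert (B / (INR N + INR M) < t); [|lra].
    apply Rmult_lt_reg_r with (INR N + INR M); [lra|].
    replace (B / (INR N + INR M) * (INR N + INR M)) with B by (field; lra). nra. }
  destruct (crossing_index N t HN M HyM ltac:(lra)) as [n [Hn1 [Hn2 Hn3]]].
  exists (x n). split; [exists n; split; [lia|auto]|].
  rewrite Hx. replace (x0 + sg * t - (x0 + sg * y n)) with (sg * (t - y n)) by ring.
  rewrite Rabs_sg, Rabs_left1 by lra.
  pose proof (Hgap n ltac:(lia)).
  assert (HNn : INR N <= INR n) by (apply le_INR; lia).
  assert (G / (INR n * INR n) <= G / (INR N * INR N)).
  { apply Rmult_le_compat_l; [lra|]. apply Rinv_le_contravar; nra. }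
  assert (G / (INR N * INR N) < eps).
  { apply Rmult_lt_reg_r with (INR N * INR N); [nra|].
    replace (G / (INR N * INR N) * (INR N * INR N)) with G by (field; nra). lra. }
  lra.
Qed.

Lemma measure_ge_tail (eps m : R) (N : nat) : (1 <= N)%nat -> 0 < eps ->
  G < eps * (INR N * INR N) -> lebesgue_measure (nbhd Orb eps) m -> y N <= m.
Proof.
  intros HN He HGN Hm. pose proof (Hpos N HN).
  destruct Hsg as [E|E].
  - replace (y N) with ((x0 + y N) - x0) by ring.
    apply (measure_ge_interval (nbhd Orb eps) x0 (x0 + y N) m); [lra| |auto].
    intros z Hz. replace z with (x0 + sg * (z - x0)) by (rewrite E; ring).
    apply (tail_in_nbhd eps N); auto; lra.
  - replace (y N) with (x0 - (x0 - y N)) by ring.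
    apply (measure_ge_interval (nbhd Orb eps) (x0 - y N) x0 m); [lra| |auto].
    intros z Hz. replace z with (x0 + sg * (x0 - z)) by (rewrite E; ring).
    apply (tail_in_nbhd eps N); auto; lra.
Qed.

(* Cover: one interval of length 2*(y_N + eps) around x0 for the tail, and
   intervals of length 2*eps around x_1, ..., x_(N-1). *)
Lemma cover_tail_and_head (eps : R) (N : nat) : (1 <= N)%nat -> 0 < eps ->
  exists l, cover_length (nbhd Orb eps) l /\ l <= 2 * y N + 2 * eps + 2 * eps * INR N.
Proof.
  intros HN He.
  set (a := fun k => match k with 0%nat => x0 - y N - eps
                    | _ => if Nat.ltb k N then x k - eps else 0 end).
  set (b := fun k => match k with 0%nat => x0 + y N + eps
                    | _ => if Nat.ltb k N then x k + eps else 0 end).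
  set (f := fun k => b k - a k).
  pose proof (Hpos N HN) as HyN.
  assert (Hab : forall k, a k <= b k).
  { intros [|k]; unfold a, b; [lra|]. destruct (Nat.ltb (S k) N); lra. }
  assert (Hzero : forall k, (N <= k)%nat -> f k = 0).
  { intros [|k] Hk; [lia|]. unfold f, a, b.
    replace (Nat.ltb (S k) N) with false; [ring|].
    symmetry. apply Nat.ltb_ge. lia. }
  assert (Hstable : forall j, sum_f_R0 f (N + j) = sum_f_R0 f N).
  { induction j; [now rewrite Nat.add_0_r|].
    rewrite Nat.add_succ_r. simpl. rewrite IHj, Hzero by lia. ring. }
  exists (sum_f_R0 f N). split.
  - exists a, b. split; [auto|]. split.
    + intros z [w [[n [Hn1 ->]] Hzw]]. apply Rabs_def2 in Hzw.
      destruct (Nat.ltb n N) eqn:E.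
      * exists n. unfold a, b. destruct n; [lia|]. rewrite E. lra.
      * apply Nat.ltb_ge in E. exists 0%nat. unfold a, b.
        pose proof (y_le_from N (n - N) HN). replace (N + (n - N))%nat with n in H by lia.
        rewrite Hx in Hzw. pose proof (Hpos n Hn1).
        destruct Hsg as [E1|E1]; rewrite E1 in Hzw; lra.
    + intros e0 He0. exists N. intros n Hn. unfold Rdist.
      replace n with (N + (n - N))%nat by lia. rewrite Hstable.
      rewrite Rminus_diag, Rabs_R0. lra.
  - assert (Hb : forall k, sum_f_R0 f k <= 2 * y N + 2 * eps + 2 * eps * INR k).
    { induction k; [simpl; unfold f, a, b; lra|].
      simpl sum_f_R0. rewrite S_INR.
      assert (f (S k) <= 2 * eps) by (unfold f, a, b; destruct (Nat.ltb (S k) N); lra).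
      lra. }
    apply Hb.
Qed.

Lemma orbit_sqrt_content : exists c1 C1 eta0, 0 < c1 /\ 0 < C1 /\ 0 < eta0 /\
  (forall eps, 0 < eps < eta0 -> exists m, lebesgue_measure (nbhd Orb eps) m) /\
  (forall eps m, 0 < eps < eta0 -> lebesgue_measure (nbhd Orb eps) m ->
     c1 * sqrt eps <= m <= C1 * sqrt eps).
Proof.
  set (K := 1 + G).
  assert (HK : 1 <= K /\ G < K * K) by (unfold K; split; nra).
  exists (A / (2 * K)), (2 * B + 2 + 4 * K), 1.
  split; [apply Rdiv_lt_0_compat; lra|]. split; [lra|]. split; [lra|].
  split.
  - intros eps He. destruct (scale_index K eps (proj1 HK) He) as [N [HN _]].
    apply measure_exists. destruct (cover_tail_and_head eps N HN ltac:(lra)) as [l [Hl _]].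
    exists l. exact Hl.
  - intros eps m He Hm. destruct (scale_index K eps (proj1 HK) He) as [N [HN [HN1 HN2]]].
    set (se := sqrt eps) in *.
    assert (Hse : 0 < se < 1).
    { unfold se. split; [apply sqrt_lt_R0; lra|]. rewrite <- sqrt_1. apply sqrt_lt_1; lra. }
    assert (Hse2 : se * se = eps) by (unfold se; apply sqrt_sqrt; lra).
    assert (HNp : 0 < INR N) by nra.
    split.
    + (* lower bound: the tail interval of length y_N >= A/N >= A/(2K) * sqrt eps *)
      assert (HGN : G < eps * (INR N * INR N)) by (rewrite <- Hse2; nra).
      pose proof (measure_ge_tail eps m N HN ltac:(lra) HGN Hm).
      pose proof (Hlow N HN).
      assert (A / (2 * K) * se <= A / INR N); [|lra].
      apply Rmult_le_reg_r with (2 * K * INR N); [nra|].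
      replace (A / (2 * K) * se * (2 * K * INR N)) with (A * (INR N * se)) by (field; lra).
      replace (A / INR N * (2 * K * INR N)) with (A * (2 * K)) by (field; lra).
      apply Rmult_le_compat_l; lra.
    + (* upper bound: 2 y_N + 2 eps + 2 eps N with y_N <= B/N <= B sqrt eps *)
      destruct (cover_tail_and_head eps N HN ltac:(lra)) as [l [Hl Hlb]].
      pose proof (measure_le_cover _ _ _ Hl Hm).
      pose proof (Hup N HN).
      assert (HBN : B / INR N <= B * se).
      { apply Rmult_le_reg_r with (INR N); [lra|].
        replace (B / INR N * INR N) with B by (field; lra). nra. }
      assert (eps * INR N <= 2 * K * se) by nra.
      assert (eps <= se) by nra.
      nra.
Qed.
End OrbitGeometry.

(** * 4. The quadratic recurrence be*y^2 <= y_n - y_(n+1) <= al*y^2 *)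

Lemma inv_step_lower (y y' c : R) : 0 < y -> 0 < y' -> y' * (1 + c * y) <= y ->
  / y + c <= / y'.
Proof.
  intros H1 H2 H3. apply Rmult_le_reg_r with (y * y'); [nra|].
  replace ((/ y + c) * (y * y')) with (y' * (1 + c * y)) by (field; lra).
  replace (/ y' * (y * y')) with y by (field; lra). lra.
Qed.

Lemma inv_step_upper (y y' c : R) : 0 < y -> 0 < y' -> y <= y' * (1 + c * y) ->
  / y' <= / y + c.
Proof.
  intros H1 H2 H3. apply Rmult_le_reg_r with (y * y'); [nra|].
  replace ((/ y + c) * (y * y')) with (y' * (1 + c * y)) by (field; lra).
  replace (/ y' * (y * y')) with y by (field; lra). lra.
Qed.

Section QuadraticRecurrence.
Variables (y : nat -> R) (al be r1 : R).
Hypothesis Hbe : 0 < be.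
Hypothesis Hr1 : al * r1 <= 1/2.
Hypothesis Hy1 : 0 < y 1%nat < r1.
Hypothesis Hrec : forall n, (1 <= n)%nat -> 0 < y n < r1 ->
  be * (y n * y n) <= y n - y (S n) <= al * (y n * y n).

(* The two-sided bound at y_1 forces al >= be > 0. *)
Lemma rec_al_pos : 0 < al.
Proof.
  pose proof (Hrec 1%nat (le_n 1) Hy1) as H.
  assert (0 < y 1%nat * y 1%nat) by nra. nra.
Qed.

(* The orbit never leaves (0, r1): a step removes at most half of y_n. *)
Lemma rec_in_range : forall n, (1 <= n)%nat -> 0 < y n < r1.
Proof.
  intros n Hn. induction n as [|n IH]; [lia|].
  destruct n as [|n]; [exact Hy1|].
  specialize (IH ltac:(lia)). specialize (Hrec (S n) ltac:(lia) IH). nra.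
Qed.

Lemma rec_decreasing : forall n, (1 <= n)%nat -> y (S n) < y n.
Proof.
  intros n Hn. pose proof (rec_in_range n Hn) as H. specialize (Hrec n Hn H).
  assert (0 < be * (y n * y n)) by (apply Rmult_lt_0_compat; nra). lra.
Qed.

Lemma rec_inverse_linear : forall k,
  / y 1%nat + be * INR k <= / y (S k) <= / y 1%nat + 2 * al * INR k.
Proof.
  pose proof rec_al_pos as Hal.
  induction k as [|k IH]; [simpl; lra|].
  pose proof (rec_in_range (S k) ltac:(lia)) as H1.
  pose proof (rec_in_range (S (S k)) ltac:(lia)) as H2.
  specialize (Hrec (S k) ltac:(lia) H1).
  set (Y := y (S k)) in *. set (Y' := y (S (S k))) in *.
  assert (/ Y + be <= / Y').
  { apply inv_step_lower; try lra.
    assert (Y' * (1 + be*Y) <= (Y - be*(Y*Y))*(1+be*Y)) by (apply Rmult_le_compat_r; nra).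
    assert (0 <= be * be * (Y * Y * Y)) by (apply Rmult_le_pos; [nra|]; apply Rmult_le_pos; nra).
    nra. }
  assert (/ Y' <= / Y + 2 * al).
  { apply inv_step_upper; try lra.
    assert ((Y - al*(Y*Y))*(1+2*al*Y) <= Y' * (1 + 2*al*Y)) by (apply Rmult_le_compat_r; nra).
    assert (0 <= al * (Y * Y) * (1 - 2 * al * Y)).
    { apply Rmult_le_pos; [|nra]. apply Rmult_le_pos; nra. }
    nra. }
  rewrite S_INR. lra.
Qed.

Lemma rec_inverse_bounds : exists a b, 0 < b /\ 0 < a /\
  forall n, (1 <= n)%nat -> b * INR n <= / y n <= a * INR n.
Proof.
  assert (Hy1i : 0 < / y 1%nat) by (apply Rinv_0_lt_compat; lra).
  exists (Rmax (/ y 1%nat) (2 * al)), (Rmin be (/ y 1%nat)).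
  pose proof (Rmin_l be (/ y 1%nat)). pose proof (Rmin_r be (/ y 1%nat)).
  pose proof (Rmax_l (/ y 1%nat) (2 * al)). pose proof (Rmax_r (/ y 1%nat) (2 * al)).
  split; [apply Rmin_glb_lt; lra|]. split; [lra|].
  intros [|n] Hn; [lia|]. destruct (rec_inverse_linear n) as [Hlo Hhi].
  rewrite S_INR. pose proof (pos_INR n). split; nra.
Qed.

Lemma rec_bounds : exists A B G, 0 < A /\ 0 < B /\ 0 < G /\
  (forall n, (1 <= n)%nat -> y n <= B / INR n) /\
  (forall n, (1 <= n)%nat -> A / INR n <= y n) /\
  (forall n, (1 <= n)%nat -> y n - y (S n) <= G / (INR n * INR n)).
Proof.
  destruct rec_inverse_bounds as [a [b [Hb [Ha Hab]]]].
  assert (HB : forall n, (1 <= n)%nat -> y n <= / b / INR n).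
  { intros n Hn. pose proof (rec_in_range n Hn). pose proof (Hab n Hn).
    assert (1 <= INR n) by (apply (le_INR 1); lia).
    rewrite <- (Rinv_inv (y n)). unfold Rdiv. rewrite <- Rinv_mult.
    apply Rinv_le_contravar; nra. }
  assert (Hb' : 0 < / b) by (apply Rinv_0_lt_compat; lra).
  pose proof rec_al_pos as Hal.
  exists (/ a), (/ b), (al * (/ b * / b)).
  split; [apply Rinv_0_lt_compat; lra|]. split; [auto|].
  split; [apply Rmult_lt_0_compat; nra|]. split; [exact HB|]. split.
  - intros n Hn. pose proof (rec_in_range n Hn). pose proof (Hab n Hn).
    assert (1 <= INR n) by (apply (le_INR 1); lia).
    rewrite <- (Rinv_inv (y n)). unfold Rdiv. rewrite <- Rinv_mult.
    apply Rinv_le_contravar; [apply Rinv_0_lt_compat; lra|nra].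
  - intros n Hn. pose proof (rec_in_range n Hn) as Hyn. specialize (Hrec n Hn Hyn).
    specialize (HB n Hn).
    assert (1 <= INR n) by (apply (le_INR 1); lia).
    assert (y n * y n <= (/ b / INR n) * (/ b / INR n)) by nra.
    replace (al * (/ b * / b) / (INR n * INR n))
      with (al * ((/ b / INR n) * (/ b / INR n))) by (field; lra).
    nra.
Qed.
End QuadraticRecurrence.

(** * 5. Quadratic Taylor bounds near a parabolic fixed point *)

Lemma mvt_ball (f f' : R -> R) (a d z : R) :
  (forall c, Rabs (c - a) < d -> derivable_pt_lim f c (f' c)) -> Rabs (z - a) < d ->
  exists c, f z - f a = f' c * (z - a) /\ Rabs (c - a) < d /\ 0 <= (c - a) * (z - a).
Proof.
  intros Hf Hz. apply Rabs_def2 in Hz.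
  assert (Hball : forall c, Rmin a z <= c <= Rmax a z -> Rabs (c - a) < d).
  { intros c [H1 H2]. apply Rabs_def1;
      [apply Rle_lt_trans with (Rmax a z - a)|apply Rlt_le_trans with (Rmin a z - a)];
      try lra; unfold Rmax, Rmin; destruct (Rle_dec a z); lra. }
  destruct (Rtotal_order a z) as [Haz|[<-|Haz]].
  - destruct (MVT_cor2 f f' a z Haz) as [c [Hc1 Hc2]].
    { intros c Hc. apply Hf, Hball. rewrite Rmin_left, Rmax_right; lra. }
    exists c. split; [auto|]. split; [apply Hball; rewrite Rmin_left, Rmax_right; lra|nra].
  - exists a. split; [ring|]. rewrite Rminus_diag, Rabs_R0. split; lra.
  - destruct (MVT_cor2 f f' z a Haz) as [c [Hc1 Hc2]].
    { intros c Hc. apply Hf, Hball. rewrite Rmin_right, Rmax_left; lra. }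
    exists c. split; [lra|]. split; [apply Hball; rewrite Rmin_right, Rmax_left; lra|nra].
Qed.

Lemma sign_of_second_order_zero (g g1 g2 : R -> R) (a d s : R) :
  (forall z, Rabs (z - a) < d -> derivable_pt_lim g z (g1 z)) ->
  (forall z, Rabs (z - a) < d -> derivable_pt_lim g1 z (g2 z)) ->
  (forall z, Rabs (z - a) < d -> 0 <= s * g2 z) ->
  g a = 0 -> g1 a = 0 ->
  forall z, Rabs (z - a) < d -> 0 <= s * g z.
Proof.
  intros Hg Hg1 Hs Hga Hg1a z Hz.
  destruct (mvt_ball g g1 a d z Hg Hz) as [c [Hc [Hcd Hcz]]].
  destruct (mvt_ball g1 g2 a d c Hg1 Hcd) as [e [He [Hed _]]].
  specialize (Hs e Hed).
  rewrite Hga, Rminus_0_r in Hc. rewrite Hg1a, Rminus_0_r in He.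
  rewrite Hc, He.
  replace (s * (g2 e * (c - a) * (z - a))) with ((s * g2 e) * ((c - a) * (z - a))) by ring.
  apply Rmult_le_pos; lra.
Qed.

Section Taylor.
Variables (F F1 F2 : R -> R) (x0 d : R).
Hypothesis HF1 : forall y, Rabs (y - x0) < d -> derivable_pt_lim F y (F1 y).
Hypothesis HF2 : forall y, Rabs (y - x0) < d -> derivable_pt_lim F1 y (F2 y).
Hypothesis Hfix : F x0 = x0.
Hypothesis Hd1 : F1 x0 = 1.

(* The displacement F z - z minus its would-be quadratic Taylor term m/2 (z-x0)^2. *)
Definition defect (m z : R) : R := F z - z - m / 2 * ((z - x0) * (z - x0)).

Lemma defect_deriv (m c : R) : Rabs (c - x0) < d ->
  derivable_pt_lim (defect m) c (F1 c - 1 - m * (c - x0)).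
Proof.
  intros Hc.
  pose proof (derivable_pt_lim_minus F id c (F1 c) 1 (HF1 c Hc) (derivable_pt_lim_id c)) as H1.
  pose proof (derivable_pt_lim_minus id (fct_cte x0) c 1 0 (derivable_pt_lim_id c)
     (derivable_pt_lim_const x0 c)) as H2.
  pose proof (derivable_pt_lim_mult _ _ c _ _ H2 H2) as H3.
  pose proof (derivable_pt_lim_scal _ (m / 2) c _ H3) as H4.
  pose proof (derivable_pt_lim_minus _ _ c _ _ H1 H4) as H5.
  replace (F1 c - 1 - m * (c - x0))
    with (F1 c - 1 - m / 2 * ((1 - 0) * (id c - fct_cte x0 c) + (id c - fct_cte x0 c) * (1 - 0)))
    by (unfold id, fct_cte; field).
  exact H5.
Qed.

Lemma defect_deriv2 (m c : R) : Rabs (c - x0) < d ->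
  derivable_pt_lim (fun z => F1 z - 1 - m * (z - x0)) c (F2 c - m).
Proof.
  intros Hc.
  pose proof (derivable_pt_lim_minus F1 (fct_cte 1) c (F2 c) 0 (HF2 c Hc)
     (derivable_pt_lim_const 1 c)) as H1.
  pose proof (derivable_pt_lim_minus id (fct_cte x0) c 1 0 (derivable_pt_lim_id c)
     (derivable_pt_lim_const x0 c)) as H2.
  pose proof (derivable_pt_lim_scal _ m c _ H2) as H3.
  pose proof (derivable_pt_lim_minus _ _ c _ _ H1 H3) as H4.
  replace (F2 c - m) with (F2 c - 0 - m * (1 - 0)) by ring.
  exact H4.
Qed.

Lemma taylor_quadratic_bounds (m M : R) :
  (forall y, Rabs (y - x0) < d -> m <= F2 y <= M) ->
  forall x, Rabs (x - x0) < d ->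
  m / 2 * ((x - x0) * (x - x0)) <= F x - x <= M / 2 * ((x - x0) * (x - x0)).
Proof.
  intros HmM x Hx.
  assert (Hzero : forall k, defect k x0 = 0) by (intro k; unfold defect; rewrite Hfix; ring).
  assert (Hzero1 : forall k, F1 x0 - 1 - k * (x0 - x0) = 0) by (intro k; rewrite Hd1; ring).
  pose proof (sign_of_second_order_zero (defect m) _ _ x0 d 1
    (defect_deriv m) (defect_deriv2 m) ltac:(intros z Hz; specialize (HmM z Hz); lra)
    (Hzero m) (Hzero1 m) x Hx) as Hlo.
  pose proof (sign_of_second_order_zero (defect M) _ _ x0 d (-1)
    (defect_deriv M) (defect_deriv2 M) ltac:(intros z Hz; specialize (HmM z Hz); lra)
    (Hzero M) (Hzero1 M) x Hx) as Hhi.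
  unfold defect in Hlo, Hhi. lra.
Qed.
End Taylor.

Lemma asymp_inv_of_bounds (u : nat -> R) (A B : R) : 0 < A ->
  (forall n, (1 <= n)%nat -> A / INR n <= u n <= B / INR n) ->
  asymp_equiv u (fun n => / INR n).
Proof.
  intros HA Hu. exists A, B. split; [lra|]. split.
  - specialize (Hu 1%nat (le_n 1)). simpl in Hu. lra.
  - intros n Hn. specialize (Hu n Hn).
    assert (HnR : 0 < INR n) by (apply lt_0_INR; lia).
    replace (u n / / INR n) with (u n * INR n) by (field; lra).
    replace (A / INR n) with (A * / INR n) in Hu by reflexivity.
    replace (B / INR n) with (B * / INR n) in Hu by reflexivity.
    split; apply Rmult_le_reg_r with (/ INR n); try (apply Rinv_0_lt_compat; lra);
      rewrite Rmult_assoc, Rinv_r, Rmult_1_r by lra; lra.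
Qed.

Lemma signed_distance_recurrence (x0 d al be sg : R) (F : R -> R) (x : nat -> R) :
  (sg = 1 \/ sg = -1) ->
  (forall z, Rabs (z - x0) < d ->
     be * ((z - x0) * (z - x0)) <= sg * (z - F z) <= al * ((z - x0) * (z - x0))) ->
  (forall n, (1 <= n)%nat -> x (S n) = F (x n)) ->
  forall n, (1 <= n)%nat -> 0 < sg * (x n - x0) < d ->
    let y := fun k => sg * (x k - x0) in
    be * (y n * y n) <= y n - y (S n) <= al * (y n * y n).
Proof.
  intros Hsg HT Hrec n Hn Hyn y.
  assert (Hsq : y n * y n = (x n - x0) * (x n - x0)).
  { unfold y. destruct Hsg as [-> | ->]; ring. }
  assert (Hxn : Rabs (x n - x0) < d).
  { apply Rabs_def1; destruct Hsg as [E|E]; rewrite E in Hyn; lra. }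
  rewrite Hsq.
  replace (y n - y (S n)) with (sg * (x n - F (x n))) by (unfold y; rewrite (Hrec n Hn); ring).
  exact (HT (x n) Hxn).
Qed.

Lemma one_sided_orbits (x0 r d al be sg : R) (F : R -> R) :
  0 < be -> 0 < d -> d <= r -> (sg = 1 \/ sg = -1) ->
  (forall z, Rabs (z - x0) < d ->
     be * ((z - x0) * (z - x0)) <= sg * (z - F z) <= al * ((z - x0) * (z - x0))) ->
  exists r1, 0 < r1 /\ forall x : nat -> R, 0 < sg * (x 1%nat - x0) < r1 ->
    (forall n, (1 <= n)%nat -> x (S n) = F (x n)) ->
    (forall n, (1 <= n)%nat -> x0 - r < x n < x0 + r) /\ orbit_conclusions x0 x.
Proof.
  intros Hbe Hd Hdr Hsg HT.
  assert (Hsg2 : sg * sg = 1) by (destruct Hsg as [-> | ->]; ring).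
  assert (Hal : 0 < al).
  { specialize (HT (x0 + d / 2) ltac:(rewrite Rabs_right; lra)).
    assert (0 < (x0 + d / 2 - x0) * (x0 + d / 2 - x0)) by nra. nra. }
  pose proof (Rmin_l d (/ (2 * al))). pose proof (Rmin_r d (/ (2 * al))).
  set (r1 := Rmin d (/ (2 * al))) in *.
  assert (Hr1 : 0 < r1) by (apply Rmin_glb_lt; [lra|apply Rinv_0_lt_compat; lra]).
  assert (Har1 : al * r1 <= 1/2).
  { apply Rle_trans with (al * / (2 * al)); [apply Rmult_le_compat_l; lra|].
    right. field. lra. }
  exists r1. split; [exact Hr1|]. intros x Hx1 Hrec.
  set (y := fun n => sg * (x n - x0)).
  assert (Hx : forall n, x n = x0 + sg * y n).
  { intro n. unfold y. transitivity (x0 + (sg * sg) * (x n - x0)); [rewrite Hsg2|]; ring. }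
  assert (Habs : forall n, Rabs (x n - x0) = Rabs (y n)).
  { intro n. rewrite Hx. replace (x0 + sg * y n - x0) with (sg * y n) by ring.
    rewrite Rabs_mult. destruct Hsg as [-> | ->];
      [rewrite Rabs_R1|rewrite (Rabs_left (-1)) by lra]; ring. }
  assert (Hyrec : forall n, (1 <= n)%nat -> 0 < y n < r1 ->
     be * (y n * y n) <= y n - y (S n) <= al * (y n * y n)).
  { intros n Hn Hyn.
    apply (signed_distance_recurrence x0 d al be sg F x Hsg HT Hrec n Hn); unfold y in Hyn; lra. }
  pose proof (rec_in_range y al be r1 Hbe Har1 Hx1 Hyrec) as Hinv.
  pose proof (rec_decreasing y al be r1 Hbe Har1 Hx1 Hyrec) as Hdec.
  destruct (rec_bounds y al be r1 Hbe Har1 Hx1 Hyrec)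
    as [A [B [G [HA [HB [HG [Hup [Hlow Hgap]]]]]]]].
  assert (Hpos : forall n, (1 <= n)%nat -> 0 < y n) by (intros n Hn; apply Hinv; auto).
  split; [|split].
  - intros n Hn. specialize (Hinv n Hn). pose proof (Habs n) as Hn'.
    rewrite (Rabs_right (y n)) in Hn' by lra.
    assert (Hr : Rabs (x n - x0) < r) by lra. apply Rabs_def2 in Hr. lra.
  - apply (asymp_inv_of_bounds _ A B HA). intros n Hn.
    rewrite Habs, Rabs_right by (specialize (Hpos n Hn); lra). auto.
  - destruct (orbit_sqrt_content x y x0 sg A B G Hsg Hx HA HB HG Hpos Hdec Hup Hlow Hgap)
      as [c1 [C1 [eta0 [Hc1 [HC1 [He0 [Hex Hbd]]]]]]].
    split; [apply (sqrt_content_box_dim (orbit_set x) c1 C1 eta0)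
           |apply (sqrt_content_nondegenerate (orbit_set x) c1 C1 eta0)]; assumption.
Qed.

Lemma continuity_pt_ball (f : R -> R) (a e : R) : continuity_pt f a -> 0 < e ->
  exists d, 0 < d /\ forall y, Rabs (y - a) < d -> Rabs (f y - f a) < e.
Proof.
  intros Hc He. destruct (Hc e He) as [d [Hd Hd2]]. exists d. split; [lra|].
  intros y Hy. destruct (Req_dec y a) as [->|Hya].
  - rewrite Rminus_diag, Rabs_R0. lra.
  - apply (Hd2 y). split; [split; [exact I|auto]|exact Hy].
Qed.

Lemma attracting_side_bounds (x0 r sg : R) (F F1 F2 : R -> R) :
  0 < r -> (sg = 1 \/ sg = -1) ->
  (forall y, x0 - r < y < x0 + r -> derivable_pt_lim F y (F1 y)) ->
  (forall y, x0 - r < y < x0 + r -> derivable_pt_lim F1 y (F2 y)) ->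
  continuity_pt F2 x0 -> F x0 = x0 -> F1 x0 = 1 -> sg * F2 x0 < 0 ->
  exists d, 0 < d /\ d <= r /\ forall z, Rabs (z - x0) < d ->
    (- sg * F2 x0) / 4 * ((z - x0) * (z - x0)) <= sg * (z - F z)
      <= 3 * (- sg * F2 x0) / 4 * ((z - x0) * (z - x0)).
Proof.
  intros Hr Hsg HF1 HF2 Hc Hfix Hd1 Hattr.
  set (mu := - sg * F2 x0).
  destruct (continuity_pt_ball F2 x0 (mu / 2) Hc ltac:(unfold mu; lra)) as [d0 [Hd0 Hnear]].
  pose proof (Rmin_l d0 r). pose proof (Rmin_r d0 r).
  exists (Rmin d0 r). split; [apply Rmin_glb_lt; lra|]. split; [lra|].
  assert (Hin : forall z, Rabs (z - x0) < Rmin d0 r -> x0 - r < z < x0 + r)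
    by (intros z Hz; apply Rabs_def2 in Hz; lra).
  intros z Hz.
  pose proof (taylor_quadratic_bounds F F1 F2 x0 (Rmin d0 r)
    (fun y Hy => HF1 y (Hin y Hy)) (fun y Hy => HF2 y (Hin y Hy)) Hfix Hd1
    (F2 x0 - mu / 2) (F2 x0 + mu / 2)
    ltac:(intros y Hy; specialize (Hnear y ltac:(lra)); apply Rabs_def2 in Hnear; lra)
    z Hz) as Htaylor.
  unfold mu in *. destruct Hsg as [-> | ->]; split; nra.
Qed.

Theorem theorem3 (x0 r : R) (F F1 F2 F3 : R -> R)
  (hr : 0 < r)
  (hF1 : forall y, x0 - r < y < x0 + r -> derivable_pt_lim F y (F1 y))
  (hF2 : forall y, x0 - r < y < x0 + r -> derivable_pt_lim F1 y (F2 y))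
  (hF3 : forall y, x0 - r < y < x0 + r -> derivable_pt_lim F2 y (F3 y))
  (hF3c : forall y, x0 - r < y < x0 + r -> continuity_pt F3 y)
  (hfix : F x0 = x0) (hd1 : F1 x0 = 1) :
  (F2 x0 < 0 ->
    exists r1, 0 < r1 /\
      forall x : nat -> R, x0 < x 1%nat < x0 + r1 ->
        (forall n, (1 <= n)%nat -> x (S n) = F (x n)) ->
        (forall n, (1 <= n)%nat -> x0 - r < x n < x0 + r) /\
        orbit_conclusions x0 x) /\
  (0 < F2 x0 ->
    exists r1, 0 < r1 /\
      forall x : nat -> R, x0 - r1 < x 1%nat < x0 ->
        (forall n, (1 <= n)%nat -> x (S n) = F (x n)) ->
        (forall n, (1 <= n)%nat -> x0 - r < x n < x0 + r) /\
        orbit_conclusions x0 x).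
Proof.
  assert (Hc : continuity_pt F2 x0).
  { apply derivable_continuous_pt. exists (F3 x0). apply hF3. lra. }
  (* the side sg = -sign F''(x0) attracts; orbits there satisfy everything *)
  assert (Hside : forall sg, (sg = 1 \/ sg = -1) -> sg * F2 x0 < 0 ->
    exists r1, 0 < r1 /\ forall x : nat -> R, 0 < sg * (x 1%nat - x0) < r1 ->
      (forall n, (1 <= n)%nat -> x (S n) = F (x n)) ->
      (forall n, (1 <= n)%nat -> x0 - r < x n < x0 + r) /\ orbit_conclusions x0 x).
  { intros sg Hsg Hattr.
    destruct (attracting_side_bounds x0 r sg F F1 F2 hr Hsg hF1 hF2 Hc hfix hd1 Hattr)
      as [d [Hd [Hdr Hbounds]]].
    apply (one_sided_orbits x0 r d (3 * (- sg * F2 x0) / 4) ((- sg * F2 x0) / 4) sg F);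
      auto; lra. }
  split; intros Hsign.
  - destruct (Hside 1 (or_introl eq_refl) ltac:(lra)) as [r1 [Hr1 Hall]].
    exists r1. split; [auto|]. intros x Hx1. apply Hall. lra.
  - destruct (Hside (-1) (or_intror eq_refl) ltac:(lra)) as [r1 [Hr1 Hall]].
    exists r1. split; [auto|]. intros x Hx1. apply Hall. lra.
Qed.
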